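(* Let $\Gamma=\operatorname{HNN}(G,H,\theta)$ be a non-ascending HNN extension. Then the normal closures in $\Gamma$ of the two quasi-kernels $K_{-1}$ and $K_1$ coincide.
   Context: Let $G$ be a group, $H\le G$ a subgroup and $\theta:H\to G$ an injective homomorphism; $\Gamma=\operatorname{HNN}(G,H,\theta)=\langle G,\tau\mid \tau^{-1}h\tau=\theta(h)\ (h\in H)\rangle$. Set $H_{-1}=H$, $H_1=\theta(H)$. The extension is non-ascending if $H\neq G$ and $\theta(H)\neq G$. Fix sets $S_{-1},S_1$ of representatives of the left cosets of $H_{-1}$, resp. $H_1$, in $G$ with $1\in S_{-1}\cap S_1$. Every $g\in\Gamma$ has a unique normal form $g=g_1\tau^{\varepsilon_1}g_2\tau^{\varepsilon_2}\cdots g_n\tau^{\varepsilon_n}g_{n+1}$ with $n\ge0$, $\varepsilon_i\in\{\pm1\}$, $g_i\in S_{-\varepsilon_i}$ for $1\le i\le n$, $g_{n+1}\in G$, and $g_i=1\Rightarrow\varepsilon_{i-1}=\varepsilon_i$ for $2\le i\le n$. Then $n$ is the length of $g$; if $n\ge1$, $\varepsilon_1$ is the type and $g_1$ the initial letter of $g$. For $\varepsilon\in\{\pm1\}$, $T_\varepsilon$ is the set of elements of length $\ge1$ and type $\varepsilon$, and $T_\varepsilon^\dagger\subseteq T_\varepsilon$ the subset of those with initial letter $1$. The quasi-kernels are $K_\varepsilon=\bigcap_{r\in\Gamma\setminus T_\varepsilon^\dagger} rHr^{-1}$. *)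

From Stdlib Require Import List.
Import ListNotations.

Record Group := {
  gcar :> Type;
  gmul : gcar -> gcar -> gcar;
  ginv : gcar -> gcar;
  gone : gcar;
  gmul_assoc : forall x y z, gmul x (gmul y z) = gmul (gmul x y) z;
  gmul_1l : forall x, gmul gone x = x;
  gmul_Vl : forall x, gmul (ginv x) x = gone
}.

Arguments gmul {g} _ _.
Arguments ginv {g} _.
Arguments gone {g}.

Definition is_hom {A B : Group} (f : A -> B) : Prop :=
  forall x y, f (gmul x y) = gmul (f x) (f y).

Definition is_subgroup {A : Group} (P : A -> Prop) : Prop :=
  P gone /\ (forall x y, P x -> P y -> P (gmul x y)) /\ (forall x, P x -> P (ginv x)).

Definition is_normal_subgroup {A : Group} (P : A -> Prop) : Prop :=
  is_subgroup P /\ (forall x g, P x -> P (gmul g (gmul x (ginv g)))).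

Definition normal_closure {A : Group} (S : A -> Prop) (x : A) : Prop :=
  forall N : A -> Prop, is_normal_subgroup N -> (forall y, S y -> N y) -> N x.

(* theta : H -> G injective homomorphism (theta given as a function on G,
   only its restriction to H matters) *)
Definition is_inj_hom_on {G : Group} (H : G -> Prop) (theta : G -> G) : Prop :=
  (forall x y, H x -> H y -> theta (gmul x y) = gmul (theta x) (theta y)) /\
  (forall x y, H x -> H y -> theta x = theta y -> x = y).

Definition image_on {G : Group} (H : G -> Prop) (theta : G -> G) (g : G) : Prop :=
  exists h, H h /\ theta h = g.

(* Gamma together with iota : G -> Gamma and tau is HNN(G,H,theta):
   universal property of the presentation <G, tau | tau^-1 h tau = theta h (h in H)>. *)
Definition is_HNN (G : Group) (H : G -> Prop) (theta : G -> G)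
    (Gam : Group) (iota : G -> Gam) (tau : Gam) : Prop :=
  is_hom iota /\
  (forall h, H h -> gmul (ginv tau) (gmul (iota h) tau) = iota (theta h)) /\
  (forall (X : Group) (f : G -> X) (t : X),
     is_hom f ->
     (forall h, H h -> gmul (ginv t) (gmul (f h) t) = f (theta h)) ->
     (exists F : Gam -> X, is_hom F /\ (forall g, F (iota g) = f g) /\ F tau = t) /\
     (forall F1 F2 : Gam -> X, is_hom F1 -> is_hom F2 ->
        (forall g, F1 (iota g) = F2 (iota g)) -> F1 tau = F2 tau ->
        forall x, F1 x = F2 x)).

Definition left_transversal {G : Group} (K : G -> Prop) (S : G -> Prop) : Prop :=
  S gone /\
  (forall g, exists s, S s /\ K (gmul (ginv s) g)) /\
  (forall s s', S s -> S s' -> K (gmul (ginv s) s') -> s = s').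

Inductive sgn := Neg | Pos.

Definition tpow {Gam : Group} (tau : Gam) (e : sgn) : Gam :=
  match e with Pos => tau | Neg => ginv tau end.

Fixpoint nf_prod {G Gam : Group} (iota : G -> Gam) (tau : Gam)
    (l : list (G * sgn)) (last : G) : Gam :=
  match l with
  | [] => iota last
  | (a, e) :: l' => gmul (iota a) (gmul (tpow tau e) (nf_prod iota tau l' last))
  end.

(* normal form conditions: g_i in S_{-e_i}; g_i = 1 -> e_{i-1} = e_i (i >= 2).
   Sm = S_{-1} (reps of H = H_{-1}), Sp = S_1 (reps of theta(H) = H_1). *)
Fixpoint nf_ok {G : Group} (Sm Sp : G -> Prop) (prev : option sgn)
    (l : list (G * sgn)) : Prop :=
  match l with
  | [] => True
  | (a, e) :: l' =>
      (match e with Pos => Sm a | Neg => Sp a end) /\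
      (a = gone -> match prev with None => True | Some p => p = e end) /\
      nf_ok Sm Sp (Some e) l'
  end.

Definition Tdag {G Gam : Group} (Sm Sp : G -> Prop) (iota : G -> Gam) (tau : Gam)
    (e : sgn) (x : Gam) : Prop :=
  exists (l : list (G * sgn)) (last : G),
    nf_ok Sm Sp None ((gone, e) :: l) /\ x = nf_prod iota tau ((gone, e) :: l) last.

Definition quasi_kernel {G Gam : Group} (H : G -> Prop) (Sm Sp : G -> Prop)
    (iota : G -> Gam) (tau : Gam) (e : sgn) (x : Gam) : Prop :=
  forall r : Gam, ~ Tdag Sm Sp iota tau e r ->
    exists h, H h /\ x = gmul r (gmul (iota h) (ginv r)).

(* Let g lie outside H_{-e}.  If (g tau^e) r is in T_e^dagger, then so is
   r = tau^{-e} g^{-1} tau^e w with w in normal form; writing g^{-1} = s q with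
   s a nontrivial representative and q in H_{-e}, moving q across tau^e and
   renormalising exhibits r as tau^{-e} s tau^e ..., i.e. r is in T_{-e}^dagger.
   Hence (g tau^e)^{-1} K_e (g tau^e) lies in K_{-e}.  Non-ascendingness
   supplies such a g for both signs, so each quasi-kernel is conjugate into
   the other. *)
From Stdlib Require Import List.
Import ListNotations.

Section GroupFacts.

Context {G : Group}.
Implicit Types x y z : G.

Lemma gmulV x : gmul x (ginv x) = gone.
Proof.
  rewrite <- (gmul_1l _ (gmul x (ginv x))).
  rewrite <- (gmul_Vl _ (ginv x)) at 1.
  rewrite <- (gmul_assoc _ (ginv (ginv x))).
  rewrite (gmul_assoc _ (ginv x) x (ginv x)), gmul_Vl, gmul_1l.
  apply gmul_Vl.
Qed.

Lemma gmul1 x : gmul x gone = x.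
Proof. rewrite <- (gmul_Vl _ x), gmul_assoc, gmulV, gmul_1l. reflexivity. Qed.

Lemma gmulKV x y : gmul (ginv x) (gmul x y) = y.
Proof. rewrite gmul_assoc, gmul_Vl, gmul_1l. reflexivity. Qed.

Lemma gmulK x y : gmul x (gmul (ginv x) y) = y.
Proof. rewrite gmul_assoc, gmulV, gmul_1l. reflexivity. Qed.

Lemma ginv_unique x y : gmul y x = gone -> y = ginv x.
Proof.
  intro E. rewrite <- (gmul1 y), <- (gmulV x), gmul_assoc, E, gmul_1l. reflexivity.
Qed.

Lemma ginvK x : ginv (ginv x) = x.
Proof. symmetry. apply ginv_unique, gmulV. Qed.

Lemma ginvM x y : ginv (gmul x y) = gmul (ginv y) (ginv x).
Proof.
  symmetry. apply ginv_unique.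
  rewrite <- gmul_assoc, (gmul_assoc _ (ginv x)), gmul_Vl, gmul_1l, gmul_Vl. reflexivity.
Qed.

Lemma ginv1 : ginv (@gone G) = gone.
Proof. symmetry. apply ginv_unique, gmul_1l. Qed.

Lemma gmul_idem x : gmul x x = x -> x = gone.
Proof. intro E. rewrite <- (gmulKV x x), E. apply gmul_Vl. Qed.

Lemma transversal_mem_subgroup (K S : G -> Prop) s :
  left_transversal K S -> S s -> K s -> s = gone.
Proof.
  intros [S1 [_ Suniq]] Ss Ks. symmetry. apply Suniq; auto.
  rewrite ginv1, gmul_1l. exact Ks.
Qed.

Lemma normal_closure_conj (S T : G -> Prop) a :
  (forall y, S y -> T (gmul (ginv a) (gmul y a))) ->
  forall x, normal_closure S x -> normal_closure T x.
Proof.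
  intros ST x Sx N HN TN. apply Sx; [exact HN|].
  intros y Sy.
  replace y with (gmul a (gmul (gmul (ginv a) (gmul y a)) (ginv a))).
  - apply (proj2 HN), TN, ST, Sy.
  - rewrite <- !gmul_assoc, gmulK, gmulV, gmul1. reflexivity.
Qed.

End GroupFacts.

Lemma hom1 {A B : Group} (f : A -> B) : is_hom f -> f gone = gone.
Proof. intro Hf. apply gmul_idem. rewrite <- Hf, gmul_1l. reflexivity. Qed.

Lemma homV {A B : Group} (f : A -> B) : is_hom f -> forall x, f (ginv x) = ginv (f x).
Proof. intros Hf x. apply ginv_unique. rewrite <- Hf, gmul_Vl. apply hom1, Hf. Qed.

Definition neg (e : sgn) : sgn := match e with Pos => Neg | Neg => Pos end.

Lemma tpow_neg {Gam : Group} (tau : Gam) e : tpow tau (neg e) = ginv (tpow tau e).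
Proof. destruct e; simpl; [symmetry; apply ginvK | reflexivity]. Qed.

Section HNNNormalForms.

Variables (G Gam : Group) (H : G -> Prop) (theta : G -> G).
Variables (iota : G -> Gam) (tau : Gam) (Sm Sp : G -> Prop).

Hypothesis H_subgroup : is_subgroup H.
Hypothesis theta_inj_hom : is_inj_hom_on H theta.
Hypothesis iota_hom : is_hom iota.
Hypothesis tau_conj :
  forall h, H h -> gmul (ginv tau) (gmul (iota h) tau) = iota (theta h).
Hypothesis Sm_transversal : left_transversal H Sm.
Hypothesis Sp_transversal : left_transversal (image_on H theta) Sp.

Definition Hs (e : sgn) : G -> Prop :=
  match e with Neg => H | Pos => image_on H theta end.

Definition Ss (e : sgn) : G -> Prop :=
  match e with Neg => Sm | Pos => Sp end.

Lemma Hs_subgroup e : is_subgroup (Hs e).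
Proof.
  pose proof H_subgroup as [H1 [HM HV]]. pose proof theta_inj_hom as [thetaM _].
  destruct e; simpl; [split; auto|].
  assert (theta1 : theta gone = gone).
  { apply gmul_idem. rewrite <- thetaM by auto. rewrite gmul_1l. reflexivity. }
  split; [|split].
  - exists gone. auto.
  - intros x y [a [Ha <-]] [b [Hb <-]]. exists (gmul a b). auto.
  - intros x [a [Ha <-]]. exists (ginv a). split; auto.
    apply ginv_unique. rewrite <- thetaM by auto. rewrite gmul_Vl. exact theta1.
Qed.

Lemma Ss_transversal e : left_transversal (Hs e) (Ss e).
Proof. destruct e; assumption. Qed.

Lemma nf_letter a e :
  (match e with Pos => Sm a | Neg => Sp a end) <-> Ss (neg e) a.
Proof. destruct e; reflexivity. Qed.

Lemma iota_tpow_swap e q : Hs (neg e) q ->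
  exists q', Hs e q' /\
    forall z, gmul (iota q) (gmul (tpow tau e) z) = gmul (tpow tau e) (gmul (iota q') z).
Proof.
  destruct e; simpl; intro Hq.
  - destruct Hq as [h [Hh <-]]. exists h. split; auto. intro z.
    rewrite <- tau_conj by auto. rewrite <- !gmul_assoc, gmulK. reflexivity.
  - exists (theta q). split; [exists q; auto|]. intro z.
    rewrite <- tau_conj by auto. rewrite !gmul_assoc, gmulV, gmul_1l. reflexivity.
Qed.

Lemma nf_mul_left l : forall p last c,
  nf_ok Sm Sp (Some p) l -> Hs p c ->
  exists l2 last2, nf_ok Sm Sp (Some p) l2 /\
    gmul (iota c) (nf_prod iota tau l last) = nf_prod iota tau l2 last2.
Proof.
  induction l as [|[a e] l IH]; intros p last c Hok Hc.
  - exists [], (gmul c last). split; [exact I|]. symmetry. apply iota_hom.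
  - destruct Hok as [Ha [Ha1 Hok]]. apply nf_letter in Ha.
    destruct (Ss_transversal (neg e)) as [_ [Srep _]].
    destruct (Hs_subgroup (neg e)) as [_ [HsM _]].
    destruct (Srep (gmul c a)) as [s [Hs_s Hq]].
    destruct (iota_tpow_swap e _ Hq) as [q' [Hq' swap]].
    destruct (IH e last q' Hok Hq') as [l2 [last2 [Hok2 E2]]].
    exists ((s, e) :: l2), last2. split.
    + split; [apply nf_letter; exact Hs_s|]. split; [|exact Hok2].
      intro s1. destruct p, e; try reflexivity; apply Ha1;
        apply (transversal_mem_subgroup _ _ _ (Ss_transversal _) Ha);
        rewrite s1, ginv1, gmul_1l in Hq; rewrite <- (gmulKV c a);
        (apply HsM; [apply (Hs_subgroup _), Hc | exact Hq]).
    + simpl. rewrite gmul_assoc, <- iota_hom.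
      rewrite <- (gmulK s (gmul c a)), iota_hom, <- gmul_assoc, swap, E2. reflexivity.
Qed.

Lemma Tdag_shift e g r : ~ Hs (neg e) g ->
  Tdag Sm Sp iota tau e (gmul (gmul (iota g) (tpow tau e)) r) ->
  Tdag Sm Sp iota tau (neg e) r.
Proof.
  intros Hg [l [last [[_ [_ Hok]] E]]].
  destruct (Ss_transversal (neg e)) as [_ [Srep _]].
  destruct (Ss_transversal e) as [S1 _].
  destruct (Hs_subgroup (neg e)) as [_ [_ HsV]].
  destruct (Srep (ginv g)) as [s [Hs_s Hq]].
  destruct (iota_tpow_swap e _ Hq) as [q' [Hq' swap]].
  destruct (nf_mul_left l e last q' Hok Hq') as [l2 [last2 [Hok2 E2]]].
  exists ((s, e) :: l2), last2. split.
  - split; [apply nf_letter; destruct e; exact S1|]. split; [intros; exact I|].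
    split; [apply nf_letter; exact Hs_s|]. split; [|exact Hok2].
    intro s1. exfalso. apply Hg. rewrite s1, ginv1, gmul_1l in Hq.
    rewrite <- (ginvK g). apply HsV, Hq.
  - simpl. rewrite (hom1 iota iota_hom), gmul_1l.
    rewrite <- E2, <- swap, (gmul_assoc _ (iota s)), <- iota_hom, gmulK.
    rewrite <- (gmulKV (gmul (iota g) (tpow tau e)) r), E.
    simpl. rewrite (hom1 iota iota_hom), gmul_1l, ginvM, <- gmul_assoc, (homV iota iota_hom).
    rewrite tpow_neg. reflexivity.
Qed.

Lemma quasi_kernel_conj e g y : ~ Hs (neg e) g ->
  quasi_kernel H Sm Sp iota tau e y ->
  let a := gmul (iota g) (tpow tau e) in
  quasi_kernel H Sm Sp iota tau (neg e) (gmul (ginv a) (gmul y a)).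
Proof.
  intros Hg Hy a r Hr.
  destruct (Hy (gmul a r)) as [h [Hh E]].
  { intro T. apply Hr. exact (Tdag_shift e g r Hg T). }
  exists h. split; auto. rewrite E, ginvM, <- !gmul_assoc.
  rewrite gmul_Vl, gmul1, (gmul_assoc _ (ginv a) a), gmul_Vl, gmul_1l. reflexivity.
Qed.

Lemma normal_closure_quasi_kernel_sub e : (exists g, ~ Hs (neg e) g) ->
  forall x, normal_closure (quasi_kernel H Sm Sp iota tau e) x ->
            normal_closure (quasi_kernel H Sm Sp iota tau (neg e)) x.
Proof.
  intros [g Hg]. apply (normal_closure_conj _ _ (gmul (iota g) (tpow tau e))).
  intros y Hy. exact (quasi_kernel_conj e g y Hg Hy).
Qed.

End HNNNormalForms.

Theorem mainTheorem12 (G : Group) (H : G -> Prop) (theta : G -> G)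
    (Gam : Group) (iota : G -> Gam) (tau : Gam) (Sm Sp : G -> Prop) :
  is_subgroup H ->
  is_inj_hom_on H theta ->
  is_HNN G H theta Gam iota tau ->
  (exists g, ~ H g) ->
  (exists g, ~ image_on H theta g) ->
  left_transversal H Sm ->
  left_transversal (image_on H theta) Sp ->
  forall x : Gam,
    normal_closure (quasi_kernel H Sm Sp iota tau Neg) x <->
    normal_closure (quasi_kernel H Sm Sp iota tau Pos) x.
Proof.
  intros HS Hth [Hi [Hrel _]] HnotH Hnotimage TM TP x.
  split.
  - exact (normal_closure_quasi_kernel_sub G Gam H theta iota tau Sm Sp
             HS Hth Hi Hrel TM TP Neg Hnotimage x).
  - exact (normal_closure_quasi_kernel_sub G Gam H theta iota tau Sm Sp
             HS Hth Hi Hrel TM TP Pos HnotH x).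
Qed.
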